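(* Applying a normalisation rule (NR1 or NR2) to a TDD does not change the tensor it represents. Moreover, a TDD is normal if and only if no normalisation rule is applicable to it.
   Context: Fix a finite index set $I$ with a linear order $\prec$. Indices take values in $\{0,1\}$; a tensor over $I$ is a map $\{0,1\}^I\to\mathbb{C}$ (tensors over subsets of $I$ are regarded as tensors over $I$ not depending on the other indices). Each index $x$ is regarded as the tensor $x(c)=c$, and $\overline{x}(c):=1-c$; operations on tensors are pointwise. A TDD over $I$ is $\mathcal F=(V,E,index,value,low,high,w)$: a rooted directed acyclic graph with finite node set $V$ partitioned into non-terminal nodes $V_N$ and terminal nodes $V_T$, root $r_{\mathcal F}$; $index:V_N\to I$; $value:V_T\to\mathbb{C}$; $low,high:V_N\to V$; edges are the low-edges $(v,low(v))$ and high-edges $(v,high(v))$, $v\in V_N$, plus a unique source-less incoming edge $e_r$ of the root; $w$ gives each edge a complex weight and $w_{\mathcal F}:=w(e_r)$. Node tensors: $\Phi(v)=value(v)$ for terminal $v$; otherwise $\Phi(v)=w_0\overline{x_v}\Phi(low(v))+w_1x_v\Phi(high(v))$ with $x_v=index(v)$ and $w_0,w_1$ the low-/high-edge weights. The TDD represents $\Phi(\mathcal F):=w_{\mathcal F}\Phi(r_{\mathcal F})$. Normality (w.r.t. $\prec$): the pivot of a tensor $\phi$ is the lexicographically smallest (compare at the $\prec$-smallest differing index, $0<1$) $\vec a$ with $|\phi(\vec a)|=\max_{\vec b}|\phi(\vec b)|$; $\phi$ is normal if $\phi=0$ or $\phi$ equals $1$ at its pivot. A TDD is normal if $\Phi(v)$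 is normal for every node $v$. Normalisation rules. NR1: if $v$ is a terminal node with $value(v)\neq0$ and $value(v)\neq1$, set its value to $1$ and replace the weight $w$ of each incoming edge of $v$ by $value(v)\cdot w$. NR2: let $v$ be a non-terminal node such that $\Phi(v)\neq0$ is not normal but $\Phi(low(v))$ and $\Phi(high(v))$ are both normal, with low-/high-edge weights $w_0,w_1$. If $\Phi(low(v))\neq0$ and either $\Phi(high(v))=0$ or $|w_0|\ge|w_1|$, let $w:=w_0$; otherwise let $w:=w_1$. Divide $w_0$ and $w_1$ by $w$ and multiply the weight of each incoming edge of $v$ by $w$. *)

From HB Require Import structures.
From mathcomp Require Import all_boot all_order all_algebra.
Set Implicit Arguments. Unset Strict Implicit. Unset Printing Implicit Defensive.
Import Order.TTheory GRing.Theory Num.Theory.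
Local Open Scope ring_scope.

Section TDD.
Variables (d : Order.disp_t) (I : finOrderType d) (C : numClosedFieldType).

Definition assignment := {ffun I -> bool}.
Definition tensor := assignment -> C.

Definition teq (f g : tensor) : Prop := forall a, f a = g a.

Definition tzero (f : tensor) : bool := [forall a : assignment, f a == 0].

Definition lexlt (a b : assignment) : Prop :=
  exists i : I, a i = false /\ b i = true /\
    (forall j : I, (j < i)%O -> a j = b j).

Definition is_pivot (f : tensor) (a : assignment) : Prop :=
  (forall b, `|f b| <= `|f a|) /\
  (forall b, `|f b| = `|f a| -> b = a \/ lexlt a b).

Definition normal_tensor (f : tensor) : Prop :=
  (forall a, f a = 0) \/ (exists a, is_pivot f a /\ f a = 1).

(* A TDD with (finite) node set V.  idx v = None means v is terminal
   (v in V_T), idx v = Some x means v is non-terminal with index x.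
   val v is the value of a terminal node; lo/hi the low/high successors and
   wlo/whi the weights of the low-/high-edge of a non-terminal node;
   root is the root and wroot = w(e_r) the weight of the root edge.
   (lo, hi, wlo, whi on terminal nodes and val on non-terminal nodes are
   irrelevant.) *)
Record tdd (V : finType) := Tdd {
  idx : V -> option I;
  val : V -> C;
  lo : V -> V;
  hi : V -> V;
  wlo : V -> C;
  whi : V -> C;
  root : V;
  wroot : C }.

Variable V : finType.
Implicit Types (F : tdd V) (v : V).

Definition nonterminal F v : bool := idx F v != None.
Definition terminal F v : bool := idx F v == None.

Definition edge F : rel V :=
  fun u w => nonterminal F u && ((w == lo F u) || (w == hi F u)).

Definition wf_tdd F : Prop :=
  (forall v, connect (edge F) (root F) v) /\
  (forall v, nonterminal F v ->
     ~~ connect (edge F) (lo F v) v /\ ~~ connect (edge F) (hi F v) v).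

(* Node tensors, computed by recursion with fuel; on an acyclic graph with
   #|V| nodes, fuel #|V| is enough to reach the terminals. *)
Fixpoint phi_fuel F (n : nat) (v : V) : tensor :=
  match n with
  | 0 => fun _ => 0
  | n'.+1 =>
    match idx F v with
    | None => fun _ => val F v
    | Some x => fun a =>
        wlo F v * (1 - (a x)%:R) * phi_fuel F n' (lo F v) a
        + whi F v * (a x)%:R * phi_fuel F n' (hi F v) a
    end
  end.

Definition node_tensor F v : tensor := phi_fuel F #|V| v.

Definition tdd_tensor F : tensor := fun a => wroot F * node_tensor F (root F) a.

Definition normal_tdd F : Prop := forall v, normal_tensor (node_tensor F v).

Definition nr1_applicable F v : Prop :=
  terminal F v /\ val F v <> 0 /\ val F v <> 1.

Definition apply_nr1 F v : tdd V :=
  let c := val F v in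
  {| idx := idx F;
     val := fun u => if u == v then 1 else val F u;
     lo := lo F; hi := hi F;
     wlo := fun u => if nonterminal F u && (lo F u == v)
                     then c * wlo F u else wlo F u;
     whi := fun u => if nonterminal F u && (hi F u == v)
                     then c * whi F u else whi F u;
     root := root F;
     wroot := if root F == v then c * wroot F else wroot F |}.

Definition nr2_applicable F v : Prop :=
  nonterminal F v /\ ~~ tzero (node_tensor F v) /\
  ~ normal_tensor (node_tensor F v) /\
  normal_tensor (node_tensor F (lo F v)) /\
  normal_tensor (node_tensor F (hi F v)).

Definition nr2_weight F v : C :=
  if ~~ tzero (node_tensor F (lo F v)) &&
     (tzero (node_tensor F (hi F v)) || (`|whi F v| <= `|wlo F v|))
  then wlo F v else whi F v.

Definition apply_nr2 F v : tdd V :=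
  let w := nr2_weight F v in
  {| idx := idx F; val := val F; lo := lo F; hi := hi F;
     wlo := fun u => if u == v then wlo F u / w
                     else if nonterminal F u && (lo F u == v)
                     then w * wlo F u else wlo F u;
     whi := fun u => if u == v then whi F u / w
                     else if nonterminal F u && (hi F u == v)
                     then w * whi F u else whi F u;
     root := root F;
     wroot := if root F == v then w * wroot F else wroot F |}.

End TDD.

(* Both rules rescale the tensor of a single node v by a factor w (its
   terminal value for NR1, the chosen edge weight for NR2) and multiply every
   edge entering v by w, so each node tensor of the old TDD is the
   corresponding new one times w or 1; the NR2 weight is nonzero because
   Phi(v) <> 0.  For the characterisation, argue by well-founded induction
   along the acyclic graph: a terminal tensor is constant, hence normal iff
   its value is 0 or 1, and a non-terminal node with normal children is
   normal unless NR2 applies to it. *)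
From Pilot Require Import Defs.
From HB Require Import structures.
From mathcomp Require Import all_boot all_order all_algebra.
From mathcomp Require Import ring.
From Stdlib Require Import Classical.
Set Implicit Arguments. Unset Strict Implicit. Unset Printing Implicit Defensive.
Import Order.TTheory GRing.Theory Num.Theory.
Local Open Scope ring_scope.

Section ConstantTensors.
Variables (d : Order.disp_t) (I : finOrderType d) (C : numClosedFieldType).

Lemma pivot_const (c : C) : is_pivot (fun _ : assignment I => c) [ffun=> false].
Proof.
split=> // b _.
have [->|nb] := eqVneq b [ffun=> false]; [by left | right].
have [i0 b_i0] : exists i, b i.
  apply/existsP; apply: contraNT nb; rewrite negb_exists => /forallP bF.
  by apply/eqP/ffunP => i; rewrite ffunE; apply/negbTE.
have [k b_k k_min] := arg_minP id b_i0.
exists k; rewrite ffunE; do 2!split=> //.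
move=> j j_lt_k; rewrite ffunE; apply/esym/negbTE/negP => b_j.
by have := k_min j b_j; rewrite leNgt j_lt_k.
Qed.

Lemma normal_const (f : tensor I C) (c : C) : (forall a, f a = c) ->
  normal_tensor f <-> c = 0 \/ c = 1.
Proof.
move=> fE; split.
  case=> [f0 | [a [_ fa1]]]; first by left; rewrite -(fE [ffun=> false]).
  by right; rewrite -(fE a).
case=> c01; [by left => a; rewrite fE | right].
exists [ffun=> false]; rewrite fE; split=> //.
have [fmax fmin] := pivot_const c.
by split=> b; rewrite !fE; [apply: fmax | apply: fmin].
Qed.

End ConstantTensors.

Section NodeTensors.
Variables (d : Order.disp_t) (I : finOrderType d) (C : numClosedFieldType).
Variables (V : finType) (F : tdd I C V).
Hypothesis wfF : wf_tdd F.

Definition descendants (u : V) : {set V} := [set w | connect (edge F) u w].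

Lemma descendants_card_gt0 u : (0 < #|descendants u|)%N.
Proof. by apply/card_gt0P; exists u; rewrite inE connect0. Qed.

Lemma descendants_edge_lt u w : edge F u w ->
  (#|descendants w| < #|descendants u|)%N.
Proof.
move=> uw; have /andP [ntu w_child] := uw.
have [lo_u hi_u] := wfF.2 u ntu.
apply/proper_card/properP; split.
  by apply/subsetP=> x; rewrite !inE; apply/connect_trans/connect1.
exists u; rewrite !inE ?connect0 //.
by case/orP: w_child => /eqP ->.
Qed.

Lemma tdd_ind (P : V -> Prop) :
  (forall u, (forall w, edge F u w -> P w) -> P u) -> forall u, P u.
Proof.
move=> IH u; move: {2}#|descendants u| (leqnn #|descendants u|) => n.
elim: n u => [|n IHn] u du_le.
  by move: (descendants_card_gt0 u); rewrite ltnNge du_le.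
apply: IH => w uw; apply: IHn.
by rewrite -ltnS (leq_trans (descendants_edge_lt uw)).
Qed.

Lemma edge_lo u : nonterminal F u -> edge F u (lo F u).
Proof. by move=> ntu; rewrite /edge ntu eqxx. Qed.

Lemma edge_hi u : nonterminal F u -> edge F u (hi F u).
Proof. by move=> ntu; rewrite /edge ntu eqxx orbT. Qed.

Lemma phi_fuel_stable u n m : (#|descendants u| <= n <= m)%N ->
  phi_fuel F n u = phi_fuel F m u.
Proof.
elim/tdd_ind: u n m => u IH [|n] [|m] /andP [du_le n_le_m] //.
  by move: (descendants_card_gt0 u); rewrite ltnNge du_le.
rewrite ltnS in n_le_m; rewrite /=; case idx_u: (idx F u) => [x|//].
have ntu : nonterminal F u by rewrite /nonterminal idx_u.
have fuel_ok w : edge F u w -> (#|descendants w| <= n <= m)%N.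
  by move=> uw; rewrite n_le_m andbT -ltnS (leq_trans (descendants_edge_lt uw)).
by rewrite (IH _ (edge_lo ntu) n m) ?(IH _ (edge_hi ntu) n m)
  ?fuel_ok ?edge_lo ?edge_hi.
Qed.

Lemma node_tensorE u x a : idx F u = Some x ->
  node_tensor F u a = wlo F u * (1 - (a x)%:R) * node_tensor F (lo F u) a
                      + whi F u * (a x)%:R * node_tensor F (hi F u) a.
Proof.
move=> idx_u; have ntu : nonterminal F u by rewrite /nonterminal idx_u.
rewrite /node_tensor; move: (descendants_card_gt0 u) (max_card (descendants u)).
case: #|V| => [|N] du_gt0 du_le; first by move: du_gt0; rewrite ltnNge du_le.
have fuel_ok w : edge F u w -> (#|descendants w| <= N <= N.+1)%N.
  by move=> uw; rewrite leqnSn andbT -ltnS (leq_trans (descendants_edge_lt uw)).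
by rewrite /= idx_u (phi_fuel_stable (fuel_ok _ (edge_lo ntu)))
  (phi_fuel_stable (fuel_ok _ (edge_hi ntu))).
Qed.

Lemma node_tensor_terminal u :
  terminal F u -> forall a, node_tensor F u a = Defs.val F u.
Proof.
move/eqP=> idx_u a; rewrite /node_tensor.
have : (0 < #|V|)%N by apply/card_gt0P; exists u.
by case: #|V| => [|N] //= _; rewrite idx_u.
Qed.

Lemma phi_fuel_nr1 v n u a : terminal F v ->
  phi_fuel F n u a =
    (if u == v then Defs.val F v else 1) * phi_fuel (apply_nr1 F v) n u a.
Proof.
move/eqP=> idx_v; elim: n u => [|n IH] u /=; first by rewrite mulr0.
have [->|u_neq_v] := eqVneq u v; first by rewrite idx_v /= mulr1.
rewrite mul1r; case idx_u: (idx F u) => [x|//].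
have ntu : nonterminal F u by rewrite /nonterminal idx_u.
rewrite ntu /= (IH (lo F u)) (IH (hi F u)).
by case: (lo F u == v); case: (hi F u == v); rewrite ?mul1r; ring.
Qed.

Lemma tdd_tensor_nr1 v : terminal F v ->
  teq (tdd_tensor (apply_nr1 F v)) (tdd_tensor F).
Proof.
move=> tv a; rewrite /tdd_tensor /node_tensor (phi_fuel_nr1 _ _ a tv) /=.
by case: (Defs.root F == v); rewrite ?mul1r //; ring.
Qed.

Lemma nr2_weight_neq0 v : nonterminal F v -> ~~ tzero (node_tensor F v) ->
  nr2_weight F v != 0.
Proof.
rewrite /nonterminal; case idx_v: (idx F v) => [x|//] _.
apply: contra => /eqP w0; apply/forallP => a; rewrite (node_tensorE _ idx_v).
move: w0; rewrite /nr2_weight; case: ifP => [/andP [_ hi0_or_le] | lo_or_hi] w0.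
  rewrite w0 !mul0r add0r; case/orP: hi0_or_le => [/forallP hi0 | ].
    by rewrite (eqP (hi0 a)) mulr0.
  by rewrite w0 normr0 normr_le0 => /eqP ->; rewrite !mul0r.
rewrite w0 !mul0r addr0.
have [/forallP lo0 | lo_neq0] := boolP (tzero (node_tensor F (lo F v))).
  by rewrite (eqP (lo0 a)) mulr0.
by move: lo_or_hi; rewrite lo_neq0 w0 normr0 normr_ge0 orbT.
Qed.

(* Acyclicity is needed here: were v its own child, the weight of that
   self-loop would be both divided and multiplied by w. *)
Lemma phi_fuel_nr2 v n u a : nonterminal F v -> nr2_weight F v != 0 ->
  phi_fuel F n u a =
    (if u == v then nr2_weight F v else 1) * phi_fuel (apply_nr2 F v) n u a.
Proof.
move=> ntv w_neq0; have [lo_v hi_v] := wfF.2 v ntv.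
have lo_neq_v : lo F v != v by apply: contraNneq lo_v => ->; rewrite connect0.
have hi_neq_v : hi F v != v by apply: contraNneq hi_v => ->; rewrite connect0.
elim: n u => [|n IH] u /=; first by rewrite mulr0.
have [->|u_neq_v] := eqVneq u v.
  move: ntv; rewrite /nonterminal; case: (idx F v) => [x|//] _.
  rewrite (IH (lo F v)) (IH (hi F v)) (negbTE lo_neq_v) (negbTE hi_neq_v).
  by rewrite !mul1r; field.
rewrite mul1r; case idx_u: (idx F u) => [x|//].
have ntu : nonterminal F u by rewrite /nonterminal idx_u.
rewrite ntu /= (IH (lo F u)) (IH (hi F u)).
by case: (lo F u == v); case: (hi F u == v); rewrite ?mul1r; ring.
Qed.

Lemma tdd_tensor_nr2 v : nonterminal F v -> ~~ tzero (node_tensor F v) ->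
  teq (tdd_tensor (apply_nr2 F v)) (tdd_tensor F).
Proof.
move=> ntv v_neq0 a; have w_neq0 := nr2_weight_neq0 ntv v_neq0.
rewrite /tdd_tensor /node_tensor (phi_fuel_nr2 _ _ a ntv w_neq0) /=.
by case: (Defs.root F == v); rewrite ?mul1r //; ring.
Qed.

Lemma normal_tddP :
  normal_tdd F <-> ~ (exists v, nr1_applicable F v \/ nr2_applicable F v).
Proof.
split=> [normalF [v [[tv [v_neq0 v_neq1]] | nr2v]] | no_rule u].
- have [/(_ (normalF v))] := normal_const (node_tensor_terminal tv).
  by case.
- by case: nr2v => _ [_ [/(_ (normalF v))]].
- elim/tdd_ind: u => u IH.
  case idx_u: (idx F u) => [x|].
    have ntu : nonterminal F u by rewrite /nonterminal idx_u.
    apply: NNPP => not_normal; apply: no_rule; exists u; right.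
    split=> //; split.
      apply/negP => /forallP u_zero; apply: not_normal.
      by left => a; apply/eqP/u_zero.
    by do 2?split=> //; apply: IH; rewrite ?edge_lo ?edge_hi.
  have tu : terminal F u by rewrite /terminal idx_u.
  apply/(normal_const (node_tensor_terminal tu)).
  have [|val_neq0] := eqVneq (Defs.val F u) 0; first by left.
  have [|val_neq1] := eqVneq (Defs.val F u) 1; first by right.
  by exfalso; apply: no_rule; exists u; left; split; last split; apply/eqP.
Qed.

End NodeTensors.

Theorem theorem1 (d : Order.disp_t) (I : finOrderType d)
  (C : numClosedFieldType) (V : finType) (F : tdd I C V) :
  wf_tdd F ->
  (forall v : V, nr1_applicable F v ->
     teq (tdd_tensor (apply_nr1 F v)) (tdd_tensor F)) /\
  (forall v : V, nr2_applicable F v ->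
     teq (tdd_tensor (apply_nr2 F v)) (tdd_tensor F)) /\
  (normal_tdd F <-> ~ (exists v : V, nr1_applicable F v \/ nr2_applicable F v)).
Proof.
move=> wfF; split; first by move=> v [tv _]; apply: tdd_tensor_nr1.
split; first by move=> v [ntv [v_nonzero _]]; apply: tdd_tensor_nr2.
exact: normal_tddP.
Qed.
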